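(* There is a deterministic algorithm which, given the level of every vertex of $G$ and access to a matrix-vector oracle $q\mapsto Mq$ (over $GF(2)$) for the adjacency matrix $M$ of $G$, correctly determines the parent of every non-root vertex of $G$ using $O(\log^2 n)$ oracle queries, where $G$ is any directed graph on vertex set $[n]$ that is the reflexive transitive closure of a branching.
   Context: A branching is a forest of rooted trees with all edges directed away from the roots; its reflexive transitive closure adds an edge $(u,w)$ whenever $w$ is reachable from $u$, including a loop at every vertex. The adjacency matrix $M\in\{0,1\}^{n\times n}$ has $M_{j,i}=1$ iff $(i,j)$ is an edge of $G$. The level of a vertex is its depth in the underlying branching (roots on level $0$); the parent of a vertex on level $\ell\geq1$ is its parent in the branching, i.e. its unique in-neighbor in $G$ on level $\ell-1$. *)

From HB Require Import structures.
From mathcomp Require Import all_boot all_order all_algebra.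
Set Implicit Arguments. Unset Strict Implicit. Unset Printing Implicit Defensive.
Import GRing.Theory.
Local Open Scope ring_scope.

(* A branching on vertex set 'I_n is given by a partial parent function:
   par v = None iff v is a root, par v = Some p iff p is the parent of v. *)

Definition iterp n (par : 'I_n -> option 'I_n) (k : nat) (v : 'I_n) : option 'I_n :=
  iter k (fun o => obind par o) (Some v).

Definition reach n (par : 'I_n -> option 'I_n) (u w : 'I_n) : Prop :=
  exists k, iterp par k w = Some u.

Definition is_branching n (par : 'I_n -> option 'I_n) : Prop :=
  forall v : 'I_n, exists k, iterp par k v = None.

Definition is_level n (par : 'I_n -> option 'I_n) (lev : 'I_n -> nat) : Prop :=
  forall v : 'I_n,
    (par v = None -> lev v = 0%N) /\
    (forall p, par v = Some p -> lev v = (lev p).+1).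

(* M is the GF(2) adjacency matrix of the reflexive transitive closure G of
   the branching: M j i = 1 iff (i,j) is an edge of G iff j reachable from i. *)
Definition is_closure_adjmx n (par : 'I_n -> option 'I_n) (M : 'M['F_2]_n) : Prop :=
  forall i j : 'I_n, M j i = 1 <-> reach par i j.

(* Deterministic adaptive query algorithms (decision trees) with a
   matrix-vector oracle q |-> M q over GF(2): either ask a query vector q and
   continue depending on the answer M q, or output a parent assignment. *)
Inductive qtree (n : nat) : Type :=
  | Ask : 'cV['F_2]_n -> ('cV['F_2]_n -> qtree n) -> qtree n
  | Answer : ('I_n -> 'I_n) -> qtree n.

Fixpoint run n (t : qtree n) (M : 'M['F_2]_n) : ('I_n -> 'I_n) * nat :=
  match t with
  | Answer f => (f, 0%N)
  | Ask q k => let r := run (k (M *m q)) M in (r.1, r.2.+1)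
  end.

(* Multiplying by M sums a vector over the ancestors of each vertex.  The query
   that puts bit b of the label of u at every vertex u whose level lies in a set
   S therefore answers, at v, the sum of bit b over the ancestors of v with
   level in S.  Let x = lev v - 1 be the level of the parent.  Descending through
   the binary expansion of x, suppose the ancestor w of v at level m (x with its
   bits below k+1 cleared) is known.  If bit k of x is set, the only level in
   (m, lev v] congruent to 2^k modulo 2^(k+1) is m + 2^k, so subtracting the
   answer at w from the answer at v for S = {l | l = 2^k mod 2^(k+1)} yields bit b
   of the ancestor at level m + 2^k.  After log n rounds of log n bits each, the
   ancestor at level x, i.e. the parent, is known; all queries are fixed in
   advance. *)

From mathcomp Require Import all_boot all_order all_algebra.
From mathcomp Require Import zify.
Set Implicit Arguments. Unset Strict Implicit. Unset Printing Implicit Defensive.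
Import GRing.Theory.

Lemma eq_from_bits (B u w : nat) : u < 2 ^ B -> w < 2 ^ B ->
  (forall b, b < B -> odd (u %/ 2 ^ b) = odd (w %/ 2 ^ b)) -> u = w.
Proof.
elim: B u w => [|B IH] u w ltuB ltwB eq_bits.
  by clear eq_bits; move: ltuB ltwB; rewrite expn0; case: u; case: w.
have eq_half : u./2 = w./2.
  apply: IH; try by rewrite -divn2 ltn_divLR // -expnSr.
  by move=> b ltbB; have := eq_bits b.+1 ltbB; rewrite expnS -!divn2 !divnMA.
have := eq_bits 0 isT; rewrite !expn0 !divn1 => eq_odd.
by rewrite -[u]odd_double_half -[w]odd_double_half eq_odd eq_half.
Qed.

Definition round_down k x := x %/ 2 ^ k * 2 ^ k.

Lemma round_down0 x : round_down 0 x = x.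
Proof. by rewrite /round_down expn0 divn1 muln1. Qed.

Lemma round_down_small k x : x < 2 ^ k -> round_down k x = 0.
Proof. by move=> ltxk; rewrite /round_down divn_small. Qed.

Lemma round_down_le k x : round_down k x <= x.
Proof. exact: leq_divM. Qed.

Lemma round_down_ltn k x : x < round_down k x + 2 ^ k.
Proof. by rewrite /round_down addnC -mulSn ltn_ceil ?expn_gt0. Qed.

Lemma round_downS k x :
  round_down k x = round_down k.+1 x + odd (x %/ 2 ^ k) * 2 ^ k.
Proof.
rewrite /round_down expnSr divnMA divn2 -{1}[x %/ 2 ^ k]odd_double_half.
by rewrite mulnDl addnC -muln2 mulnAC mulnA.
Qed.

Definition dyadic_levels f : pred nat :=
  if f is k.+1 then fun l => l %% 2 ^ k.+1 == 2 ^ k else pred1 0.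

Lemma dyadic_window k x j : odd (x %/ 2 ^ k) -> j <= x.+1 ->
  (round_down k.+1 x < j) && (j %% 2 ^ k.+1 == 2 ^ k)
  = (j == round_down k.+1 x + 2 ^ k).
Proof.
move=> odd_x le_jx; set m := round_down k.+1 x.
have pos_k : 0 < 2 ^ k by rewrite expn_gt0.
have lt_k : 2 ^ k < 2 ^ k.+1 by rewrite ltn_exp2l.
have lt_xm := round_down_ltn k.+1 x.
have dvd_m : m = x %/ 2 ^ k.+1 * 2 ^ k.+1 by [].
apply/idP/eqP => [/andP[lt_mj /eqP mod_j] | ->].
  have def_j : j = x %/ 2 ^ k.+1 * 2 ^ k.+1 + (j - m) by lia.
  rewrite def_j modnMDl in mod_j.
  have [lt_jm | eq_jm] : j - m < 2 ^ k.+1 \/ j - m = 2 ^ k.+1 by lia.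
    by rewrite modn_small in mod_j; lia.
  by rewrite eq_jm modnn in mod_j; lia.
by apply/andP; split; [lia | rewrite dvd_m modnMDl modn_small].
Qed.

Section Branching.
Variables (n : nat) (par : 'I_n -> option 'I_n) (lev : 'I_n -> nat).
Hypothesis par_lev : is_level par lev.

Lemma iterp_lev k v u : iterp par k v = Some u -> lev u + k = lev v.
Proof.
elim: k u => [|k IH] u /=; first by case=> ->; rewrite addn0.
rewrite /iterp /=; case def_w: (iter k _ _) => [w|] //= par_w.
have [_ /(_ u par_w) lev_w] := par_lev w; rewrite -addSnnS -lev_w; exact: IH.
Qed.

Lemma iterp_defined k v : k <= lev v -> exists u, iterp par k v = Some u.
Proof.
elim: k => [|k IH] le_kv; first by exists v.
have [w def_w] := IH (ltnW le_kv); rewrite /iterp /= -/(iterp par k v) def_w /=.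
case par_w: (par w) => [p|]; first by exists p.
have [/(_ par_w) lev_w _] := par_lev w.
by have := iterp_lev def_w; rewrite lev_w; lia.
Qed.

Definition anc v j := odflt v (iterp par (lev v - j) v).

Lemma iterp_anc v j : iterp par (lev v - j) v = Some (anc v j).
Proof. by have [u def_u] := iterp_defined (leq_subr j (lev v)); rewrite /anc def_u. Qed.

Lemma lev_anc v j : j <= lev v -> lev (anc v j) = j.
Proof. by move=> le_jv; have := iterp_lev (iterp_anc v j); lia. Qed.

Lemma anc_anc v m j : j <= m -> m <= lev v -> anc (anc v m) j = anc v j.
Proof.
move=> le_jm le_mv; rewrite {1}/anc lev_anc //.
have split_path : lev v - j = (m - j) + (lev v - m) by lia.
have := iterp_anc v j; rewrite split_path /iterp iterD -/(iterp par _ v) iterp_anc.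
by rewrite -/(iterp par _ (anc v m)) => ->.
Qed.

Lemma anc_parent v p : par v = Some p -> anc v (lev v).-1 = p.
Proof.
move=> par_v; have [_ /(_ p par_v) lev_v] := par_lev v.
by rewrite /anc lev_v /= subSn // subnn /iterp /= par_v.
Qed.

Lemma anc_inj v : injective (fun j : 'I_(lev v).+1 => anc v j).
Proof.
move=> i j /= eq_anc; apply: val_inj => /=.
by rewrite -(lev_anc (ltn_ord i : i <= lev v)) eq_anc lev_anc // -ltnS.
Qed.

Definition ancestors v : {set 'I_n} := [set anc v j | j : 'I_(lev v).+1].

Lemma reach_ancestors i v : reach par i v <-> i \in ancestors v.
Proof.
split=> [[k def_i] | /imsetP[j _ ->]].
  have le_iv : lev i < (lev v).+1 by rewrite ltnS -(iterp_lev def_i) leq_addr.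
  apply/imsetP; exists (Ordinal le_iv) => //=.
  by rewrite /anc -(iterp_lev def_i) addKn def_i.
by exists (lev v - j); rewrite iterp_anc.
Qed.

Lemma lev_ltn v : lev v < n.
Proof.
have := max_card (ancestors v).
by rewrite card_imset ?card_ord //; exact: anc_inj.
Qed.

End Branching.

Local Open Scope ring_scope.

Lemma F2_eq0_or_eq1 (x : 'F_2) : x = 0 \/ x = 1.
Proof. by case: x => [[|[|m]] lt_x2]; [left | right | by []]; apply: val_inj. Qed.

Section Bits.
Variable n : nat.

Definition bit (u : 'I_n) b : 'F_2 := (odd (u %/ 2 ^ b)%N)%:R.

Lemma bit_inj B (u w : 'I_n) : (n <= 2 ^ B)%N ->
  (forall b, (b < B)%N -> bit u b = bit w b) -> u = w.
Proof.
move=> le_nB eq_bit; apply/val_inj/(@eq_from_bits B).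
- exact: leq_trans (ltn_ord u) le_nB.
- exact: leq_trans (ltn_ord w) le_nB.
move=> b lt_bB; move: (eq_bit b lt_bB); rewrite /bit.
by case: (odd _); case: (odd _) => // /eqP; rewrite ?oner_eq0 // eq_sym oner_eq0.
Qed.

Definition decode B (D : nat -> 'F_2) (d : 'I_n) : 'I_n :=
  odflt d [pick u | [forall b : 'I_B, bit u b == D b]].

Lemma decodeE B D d u : (n <= 2 ^ B)%N ->
  (forall b, (b < B)%N -> D b = bit u b) -> decode B D d = u.
Proof.
move=> le_nB def_D; rewrite /decode.
case: pickP => [w /forallP bits_w | no_u] /=.
  apply: (bit_inj le_nB) => b lt_bB.
  by rewrite -def_D // (eqP (bits_w (Ordinal lt_bB))).
by have /forallP[] := negbT (no_u u) => b; rewrite def_D.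
Qed.

End Bits.

Section Closure.
Variables (n : nat) (par : 'I_n -> option 'I_n) (lev : 'I_n -> nat).
Variable M : 'M['F_2]_n.
Hypotheses (par_lev : is_level par lev) (closure_M : is_closure_adjmx par M).

Lemma closure_mxE v i : M v i = (i \in ancestors par lev v)%:R.
Proof.
have [/(reach_ancestors par_lev)/closure_M -> // | not_anc] := boolP (i \in _).
have [// | M_vi] := F2_eq0_or_eq1 (M v i).
by case/negP: not_anc; apply/(reach_ancestors par_lev)/closure_M.
Qed.

Lemma closure_mulmxE (q : 'cV['F_2]_n) v :
  (M *m q) v 0 = \sum_(j < (lev v).+1) q (anc par lev v j) 0.
Proof.
transitivity (\sum_(i in ancestors par lev v) q i 0).
  rewrite mxE [RHS]big_mkcond; apply: eq_bigr => i _.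
  by rewrite closure_mxE; case: (_ \in _); rewrite ?mul1r ?mul0r.
by rewrite big_imset //; move=> i j _ _; apply: anc_inj.
Qed.

Definition level_query (S : pred nat) b : 'cV['F_2]_n :=
  \col_u (if S (lev u) then bit u b else 0).

Lemma level_queryE S b v :
  (M *m level_query S b) v 0 = \sum_(j < (lev v).+1 | S j) bit (anc par lev v j) b.
Proof.
rewrite closure_mulmxE [RHS]big_mkcond; apply: eq_bigr => j _.
by rewrite mxE lev_anc // -ltnS.
Qed.

Lemma level_query_single S b v j0 : (j0 <= lev v)%N ->
  (forall j, (j <= lev v)%N -> S j = (j == j0)) ->
  (M *m level_query S b) v 0 = bit (anc par lev v j0) b.
Proof.
move=> le_j0v S_j0; rewrite level_queryE.
rewrite (big_pred1 (Ordinal (le_j0v : (j0 < (lev v).+1)%N))) //.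
by move=> j; rewrite /= S_j0 // -ltnS.
Qed.

Lemma level_query_window S b v m j0 : (m <= lev v)%N -> (j0 <= lev v)%N ->
  (forall j, (j <= lev v)%N -> (m < j)%N && S j = (j == j0)) ->
  (M *m level_query S b) v 0 - (M *m level_query S b) (anc par lev v m) 0
  = bit (anc par lev v j0) b.
Proof.
move=> le_mv le_j0v S_j0; rewrite !level_queryE lev_anc //.
rewrite (big_ord_widen_cond (lev v).+1 S
  (fun j => bit (anc par lev (anc par lev v m) j) b)) ?ltnS //.
rewrite [X in _ - X](eq_bigr (fun j : 'I__ => bit (anc par lev v j) b)); last first.
  by move=> j /= /andP[_ lt_jm]; rewrite anc_anc // -ltnS.
rewrite (bigID (fun j : 'I__ => (j < m.+1)%N)) /= addrC addrK.
rewrite (big_pred1 (Ordinal (le_j0v : (j0 < (lev v).+1)%N))) //.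
by move=> j; rewrite /= -ltnNge andbC S_j0 // -ltnS.
Qed.

End Closure.

Section Climb.
Variables (n : nat) (lev : 'I_n -> nat) (B : nat) (R : nat -> nat -> 'cV['F_2]_n).

Fixpoint climb t v : 'I_n :=
  if t is t'.+1 then
    let k := (B - t)%N in let w := climb t' v in
    if odd ((lev v).-1 %/ 2 ^ k)%N then
      decode B (fun b => R k.+1 b v 0 - R k.+1 b w 0) v
    else w
  else decode B (fun b => R 0%N b v 0) v.

Variables (par : 'I_n -> option 'I_n) (M : 'M['F_2]_n).
Hypotheses (par_lev : is_level par lev) (closure_M : is_closure_adjmx par M).
Hypothesis le_nB : (n <= 2 ^ B)%N.
Hypothesis def_R : forall f b, (f <= B)%N -> (b < B)%N ->
  R f b = M *m level_query lev (dyadic_levels f) b.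

Lemma climbE v t : (t <= B)%N ->
  climb t v = anc par lev v (round_down (B - t) (lev v).-1).
Proof.
set x := (lev v).-1; have le_xv : (x <= lev v)%N := leq_pred _.
have le_vx : (lev v <= x.+1)%N := leqSpred _.
have lt_xB : (x < 2 ^ B)%N.
  exact: leq_ltn_trans le_xv (leq_trans (lev_ltn par_lev v) le_nB).
elim: t => [|t IH] le_tB /=.
  rewrite subn0 round_down_small //; apply: decodeE => // b lt_bB.
  by rewrite def_R //; apply: (level_query_single par_lev closure_M).
set k := (B - t.+1)%N; have def_k : (B - t = k.+1)%N by rewrite /k; lia.
rewrite IH ?(ltnW le_tB) // def_k (round_downS k).
case: ifP => odd_x; last by rewrite mul0n addn0.
have le_kB : (k.+1 <= B)%N by rewrite /k; lia.
have le_mv : (round_down k.+1 x <= lev v)%N := leq_trans (round_down_le _ _) le_xv.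
have le_j0v : (round_down k.+1 x + 2 ^ k <= lev v)%N.
  by have := round_down_le k x; rewrite (round_downS k) odd_x mul1n => /leq_trans->.
rewrite mul1n; apply: decodeE => // b lt_bB; rewrite !def_R //.
apply: level_query_window => // j le_jv.
exact: dyadic_window (leq_trans le_jv le_vx).
Qed.

End Climb.

Fixpoint ask_seq n (qs : seq 'cV['F_2]_n) (F : seq 'cV['F_2]_n -> 'I_n -> 'I_n) :
    qtree n :=
  if qs is q :: qs' then Ask q (fun r => ask_seq qs' (fun rs => F (r :: rs)))
  else Answer (F [::]).

Lemma run_ask_seq n (qs : seq 'cV['F_2]_n) F M :
  run (ask_seq qs F) M = (F (map (mulmx M) qs), size qs).
Proof. by elim: qs F => [|q qs IH] F //=; rewrite IH. Qed.

Definition ask_all n (X : finType) (q : X -> 'cV['F_2]_n)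
    (F : {ffun X -> 'cV['F_2]_n} -> 'I_n -> 'I_n) : qtree n :=
  ask_seq (map q (enum X)) (fun rs => F [ffun x => nth 0 rs (enum_rank x)]).

Lemma run_ask_all n (X : finType) (q : X -> 'cV['F_2]_n) F M :
  run (ask_all q F) M = (F [ffun x => M *m q x], #|X|).
Proof.
rewrite run_ask_seq size_map -cardE -map_comp; congr (F _, _).
apply/ffunP => x; rewrite !ffunE (nth_map x) ?nth_enum_rank //.
by rewrite -cardE ltn_ord.
Qed.

Definition nbits n := (trunc_log 2 n).+1.

Definition parent_query n (lev : 'I_n -> nat)
    (fb : 'I_(nbits n).+1 * 'I_(nbits n)) : 'cV['F_2]_n :=
  level_query lev (dyadic_levels fb.1) fb.2.

Definition find_parents n (lev : 'I_n -> nat) : qtree n :=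
  ask_all (parent_query lev) (fun R =>
    climb lev (nbits n) (fun f b => R (inord f, inord b)) (nbits n)).

Theorem lemma23 :
  exists (A : forall n : nat, ('I_n -> nat) -> qtree n) (C : nat),
    forall (n : nat) (par : 'I_n -> option 'I_n) (lev : 'I_n -> nat)
           (M : 'M['F_2]_n),
      is_branching par -> is_level par lev -> is_closure_adjmx par M ->
      (forall v p : 'I_n, par v = Some p -> (run (A n lev) M).1 v = p) /\
      ((run (A n lev) M).2 <= C * (trunc_log 2 n).+1 ^ 2)%N.
Proof.
(* Acyclicity of [par] already follows from the existence of a level function. *)
exists find_parents, 2%N => n par lev M _ par_lev closure_M.
rewrite run_ask_all card_prod !card_ord; split=> [v p par_v | ]; last first.
  by rewrite /= /nbits expnS expn1; nia.
rewrite -[LHS]/(climb lev (nbits n) _ (nbits n) v).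
have le_nB : (n <= 2 ^ nbits n)%N by exact/ltnW/trunc_log_ltn.
rewrite (climbE par_lev closure_M le_nB) ?subnn ?round_down0 //.
  by rewrite (anc_parent par_lev par_v).
by move=> f b le_fB lt_bB; rewrite ffunE /parent_query /= !inordK.
Qed.
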